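(* Let $m$ be a prime and let $k<n$ be positive integers. Let $\mathcal{C}\subseteq\mathbb{F}_{q^m}^n$ be an $[n,k]$ linear code with systematic generator matrix $[I_k\,|\,A]$, $A\in\mathcal{M}_{k,n-k}(\mathbb{F}_{q^m})$, and let $\mathcal{S}$ be the set of entries of $A$. If some $\alpha\in\mathcal{S}$ satisfies $\alpha\notin\mathbb{F}_q$, then every $\mathbb{F}_q$-linear automorphism $\varphi$ of $\mathbb{F}_{q^m}$ that is linear on $\mathcal{C}$ is fully linear over $\mathbb{F}_{q^m}$.
   Context: $q$ is a prime power (the paper takes $q$ a power of $2$). $I_k$ is the $k\times k$ identity matrix. An $\mathbb{F}_q$-linear automorphism of $\mathbb{F}_{q^m}$ is a bijective $\mathbb{F}_q$-linear map $\varphi:\mathbb{F}_{q^m}\to\mathbb{F}_{q^m}$, applied componentwise to vectors, with $\varphi(\mathcal{V})=\{\varphi(\bm{v}):\bm{v}\in\mathcal{V}\}$. $\varphi$ is linear on an $\mathbb{F}_{q^m}$-linear code $\mathcal{C}$ if $\varphi(\mathcal{C})$ is an $\mathbb{F}_{q^m}$-linear subspace; $\varphi$ is fully linear over $\mathbb{F}_{q^m}$ if it is linear on every $\mathbb{F}_{q^m}$-linear code of every length. *)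

From HB Require Import structures.
From mathcomp Require Import all_boot all_order all_algebra all_field.
Set Implicit Arguments. Unset Strict Implicit. Unset Printing Implicit Defensive.
Import GRing.Theory.
Local Open Scope ring_scope.

(* F plays F_q, L plays F_{q^m} (a finite-dimensional extension of F). *)

Definition Flin_aut (F : finFieldType) (L : fieldExtType F) (phi : L -> L) : Prop :=
  (forall (a : F) (x y : L), phi (a *: x + y) = a *: phi x + phi y) /\ bijective phi.

Definition is_Lsubspace (L : fieldType) (n : nat) (V : 'rV[L]_n -> Prop) : Prop :=
  V 0 /\ (forall (a : L) (u v : 'rV[L]_n), V u -> V v -> V (a *: u + v)).

Definition img_code (L : fieldType) (n : nat) (phi : L -> L) (V : 'rV[L]_n -> Prop)
  : 'rV[L]_n -> Prop :=
  fun w => exists v, V v /\ w = map_mx phi v.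

Definition linear_on (L : fieldType) (n : nat) (phi : L -> L) (V : 'rV[L]_n -> Prop) : Prop :=
  is_Lsubspace (img_code phi V).

Definition fully_linear (L : fieldType) (phi : L -> L) : Prop :=
  forall (n : nat) (V : 'rV[L]_n -> Prop), is_Lsubspace V -> linear_on phi V.

Definition code_of (L : fieldType) (k n : nat) (G : 'M[L]_(k, n)) : 'rV[L]_n -> Prop :=
  fun v => exists x : 'rV[L]_k, v = x *m G.

From HB Require Import structures.
From mathcomp Require Import all_boot all_order all_algebra all_field.
Import GRing.Theory.
Set Implicit Arguments. Unset Strict Implicit. Unset Printing Implicit Defensive.
Local Open Scope ring_scope.

(* Write g for the inverse
   of phi and, for a in L, psi_a t := g (a * phi t), the conjugate of the
   multiplication by a; psi_a is F-linear.
   - Linearity of phi on C, tested on the codeword t e_i0 [I_k | A] scaled by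
     a, forces psi_a (t * alpha) = psi_a t * alpha.
   - Since m is prime, alpha generates L over F, so every t is a polynomial
     in alpha; an F-linear map commuting with multiplication by alpha is then
     multiplication by a constant: psi_a t = psi_a 1 * t.
   - Hence phi (psi_a 1 * x) = a * phi x for every x, i.e. every scaling of
     an image vector is the image of a scaling, which is exactly what makes
     phi(V) an L-subspace for every L-subspace V: phi is fully linear. *)

Section FLinearMaps.

Variables (F : finFieldType) (L : fieldExtType F).

Definition Flinear (f : L -> L) : Prop :=
  (forall x y, f (x + y) = f x + f y) /\ (forall (c : F) x, f (c *: x) = c *: f x).

Lemma Flinear0 (f : L -> L) : Flinear f -> f 0 = 0.
Proof. by move=> [_ fZ]; have := fZ 0 0; rewrite !scale0r. Qed.

Lemma Flin_aut_Flinear (phi : L -> L) : Flin_aut phi -> Flinear phi.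
Proof.
move=> [phiL _]; have phiD x y : phi (x + y) = phi x + phi y.
  by have := phiL 1 x y; rewrite !scale1r.
split=> // c x; have phi0 : phi 0 = 0 by apply: (addrI (phi 0)); rewrite -phiD !addr0.
by have := phiL c x 0; rewrite !addr0 phi0 addr0.
Qed.

Lemma Flin_aut_inverse (phi : L -> L) : Flin_aut phi ->
  exists g : L -> L, [/\ cancel phi g, cancel g phi & Flinear g].
Proof.
move=> Hphi; have [phiD phiZ] := Flin_aut_Flinear Hphi.
case: Hphi => _ [g gK Kg]; exists g; split=> //; split.
  by move=> x y; apply: (can_inj gK); rewrite phiD !Kg.
by move=> c x; apply: (can_inj gK); rewrite phiZ !Kg.
Qed.

Lemma conj_mul_Flinear (phi g : L -> L) (a : L) :
  Flinear phi -> Flinear g -> Flinear (fun t => g (a * phi t)).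
Proof.
move=> [phiD phiZ] [gD gZ]; split=> [x y | c x].
  by rewrite phiD mulrDr gD.
by rewrite phiZ -scalerAr gZ.
Qed.

Lemma prime_degree_generator (alpha : L) :
  prime (\dim {: L}) -> ~ (exists c : F, alpha = c%:A) -> <<1; alpha>>%VS = fullv.
Proof.
move=> Hm Halpha; apply/eqP; rewrite eqEdim subvf /=.
have dv := field_dimS (subvf <<1; alpha>>%AS).
rewrite /= dim_Fadjoin dimv1 muln1 in dv.
case/primeP: Hm => _ /(_ _ dv) /orP [deg1 | /eqP deg_full]; last first.
  by rewrite dim_Fadjoin dimv1 muln1 deg_full.
by case: Halpha; move: deg1; rewrite adjoin_deg_eq1 => /vlineP [c ->]; exists c.
Qed.

Lemma commuting_generator_mul (f : L -> L) (alpha : L) :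
  Flinear f -> <<1; alpha>>%VS = fullv ->
  (forall t, f (t * alpha) = f t * alpha) -> forall t, f t = f 1 * t.
Proof.
move=> [fD fZ] gen fcomm t.
have f0 : f 0 = 0 by apply: Flinear0.
have fX i : f (alpha ^+ i) = f 1 * alpha ^+ i.
  by elim: i => [|i IH]; rewrite ?expr0 ?mulr1 // exprSr fcomm IH mulrA.
have /Fadjoin1_polyP [p ->] : t \in <<1; alpha>>%VS by rewrite gen memvf.
rewrite horner_coef (big_morph f fD f0) mulr_sumr; apply: eq_bigr => i _.
by rewrite coef_map /= mulr_algl fZ fX -scalerAr.
Qed.

End FLinearMaps.

(* Linearity on the systematic code [I_k | A], applied to the codeword
   t e_i [I_k | A] scaled by a, yields a preimage s of a * phi t such that
   phi (s * A i j) = a * phi (t * A i j). *)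
Lemma systematic_code_scaling (L : fieldType) (k n : nat)
  (A : 'M[L]_(k, n - k)) (phi : L -> L) :
  injective phi -> phi 0 = 0 -> linear_on phi (code_of (row_mx 1%:M A)) ->
  forall i j a t, exists s, phi s = a * phi t /\ phi (s * A i j) = a * phi (t * A i j).
Proof.
move=> phi_inj phi0 [img0 imgD] i j a t.
pose x : 'rV[L]_k := \row_l (if l == i then t else 0).
have Cx : code_of (row_mx 1%:M A) (x *m row_mx 1%:M A) by exists x.
have [_ [[y ->] Ey]] := imgD a _ 0 (ex_intro _ _ (conj Cx erefl)) img0.
rewrite addr0 !mul_mx_row !mulmx1 in Ey.
have entry c := congr1 (fun M : 'M[L]_(1, k + (n - k)) => M 0 c) Ey.
(* The preimage codeword y is supported on coordinate i, like x. *)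
have yE l : y 0 l = if l == i then y 0 i else 0.
  have := entry (lshift (n - k) l).
  rewrite /= !mxE (unsplitK (inl l)) !mxE.
  by case: eqP => [-> | _] //; rewrite phi0 mulr0 => e; apply: phi_inj; rewrite -e phi0.
have rowA (z : 'rV[L]_k) : (forall l, z 0 l = if l == i then z 0 i else 0) ->
    (z *m A) 0 j = z 0 i * A i j.
  move=> zE; rewrite mxE (bigD1 i) //= big1 ?addr0 // => l /negbTE ne.
  by rewrite zE ne mul0r.
exists (y 0 i); split.
  by have := entry (lshift (n - k) i); rewrite /= !mxE (unsplitK (inl i)) !mxE eqxx.
have xE l : x 0 l = if l == i then x 0 i else 0 by rewrite !mxE eqxx.
have := entry (rshift k j).
by rewrite /= !mxE (unsplitK (inr j)) (rowA x xE) (rowA y yE) mxE eqxx => ->.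
Qed.

Lemma fully_linear_of_scaling (L : fieldType) (phi : L -> L) :
  (forall x y, phi (x + y) = phi x + phi y) ->
  (forall a, exists b, forall x, phi (b * x) = a * phi x) -> fully_linear phi.
Proof.
move=> phiD phi_scale n V [V0 VD].
have phi0 : phi 0 = 0 by apply: (addrI (phi 0)); rewrite -phiD !addr0.
split; first by exists 0; split=> //; apply/matrixP => p q; rewrite !mxE phi0.
move=> a _ _ [u [Vu ->]] [w [Vw ->]]; have [b phib] := phi_scale a.
exists (b *: u + w); split; first exact: VD.
by apply/matrixP => p q; rewrite !mxE phiD phib.
Qed.

Theorem mainTheorem6 (F : finFieldType) (L : fieldExtType F) (m : nat)
  (Hm : prime m) (HdimL : \dim {: L} = m)
  (n k : nat) (Hk : (0 < k)%N) (Hkn : (k < n)%N)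
  (A : 'M[L]_(k, n - k))
  (HA : exists (i : 'I_k) (j : 'I_(n - k)), ~ exists c : F, A i j = c%:A)
  (phi : L -> L) (Hphi : Flin_aut phi)
  (Hlin : linear_on phi (code_of (row_mx 1%:M A))) :
  fully_linear phi.
Proof.
have phiF := Flin_aut_Flinear Hphi; have [phiD _] := phiF.
have [g [phiK gK gF]] := Flin_aut_inverse Hphi.
have [i [j alpha_notF]] := HA.
have gen : <<1; A i j>>%VS = fullv.
  by apply: prime_degree_generator alpha_notF; rewrite HdimL.
apply: (fully_linear_of_scaling phiD) => a.
pose psi t := g (a * phi t).
have psi_comm t : psi (t * A i j) = psi t * A i j.
  have [s [phis phisA]] :=
    systematic_code_scaling (can_inj phiK) (Flinear0 phiF) Hlin i j a t.
  by rewrite /psi -phisA -phis !phiK.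
have psi_mul : forall t, psi t = psi 1 * t.
  exact: commuting_generator_mul (conj_mul_Flinear a phiF gF) gen psi_comm.
by exists (psi 1) => x; rewrite -psi_mul /psi gK.
Qed.
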